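(* Let $n$ be a positive integer. All eigenvalues of the Fibonacci--Redheffer matrix $F_R(n)$ are real and simple (of algebraic multiplicity $1$). Furthermore, if $\lambda_1<\lambda_2<\cdots<\lambda_n$ are the eigenvalues of $F_R(n)$, then \[ \lambda_1<1,\qquad F_i<\lambda_i<F_{i+1}\ \ (i=2,3,\ldots,n-1),\qquad \lambda_n>F_n. \]
   Context: The Fibonacci numbers are $F_1=F_2=1$, $F_n=F_{n-1}+F_{n-2}$ for $n\ge 3$. The Fibonacci--Redheffer matrix $F_R(n)=[F_R(i,j)]_{i,j=1}^n$ is defined by $F_R(i,j)=1$ if $j=1$; $F_R(i,j)=F_i$ if $i\mid j$; and $F_R(i,j)=0$ otherwise. *)

From mathcomp Require Import all_boot all_order all_algebra.
From mathcomp Require Import reals.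
Set Implicit Arguments. Unset Strict Implicit. Unset Printing Implicit Defensive.
Import Order.TTheory GRing.Theory Num.Theory.
Local Open Scope ring_scope.

Fixpoint fib (n : nat) : nat :=
  match n with
  | 0 => 0
  | 1 => 1
  | (m.+1 as k).+1 => fib k + fib m
  end.

(* Fibonacci--Redheffer matrix F_R(n), with 0-based indices:
   entry (i, j) corresponds to the paper's (i+1, j+1). *)
Definition fibRedheffer (R : nzRingType) (n : nat) : 'M[R]_n :=
  \matrix_(i < n, j < n)
    if (j : nat) == 0%N then 1
    else if (i.+1 %| j.+1)%N then (fib i.+1)%:R else 0.

(* Let p be the characteristic polynomial of F_R(n), a monic polynomial of
   degree n.  By the intermediate value theorem it suffices to show that p
   alternates in sign at F_2 < F_3 < ... < F_n, namely (-1)^(n-j+1) p(F_j) > 0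
   for 2 <= j <= n: together with the signs of p at -oo and +oo this places
   one root in each of (-oo, F_2), (F_2, F_3), ..., (F_n, +oo).

   Fix such a j and let M = F_j I - F_R(n).  Apart from its first column,
   F_R(n) is upper triangular with diagonal F_1, ..., F_n.  Add to the first
   column of M the combination of the columns after j that clears its entries
   below row j, add to column j the combination of the columns 2, ..., j-1
   that clears its entries in rows 2, ..., j-1, and exchange columns 1 and j.
   The result is upper triangular, with diagonal entries F_j - F_i (of the
   sign of j - i) off positions 1 and j, and -1 - (sum of the second weights)
   and -1 + (row j of the first combination) at those positions.  The second
   weights are nonnegative, being the solution of an upper triangular system
   with positive diagonal and nonpositive off-diagonal entries.  Row j of the
   first combination is less than 1 because F_(md) >= (2^(m-1) + 1) F_d, so
   that the sum over m >= 2 of F_d / (F_(md) - F_d) is less than 1.  Hence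
   both exceptional entries are negative, and the sign of det M follows. *)

From mathcomp Require Import all_boot all_order all_algebra.
From mathcomp Require Import reals.
From mathcomp Require Import polyrcf perm.
From mathcomp Require Import zify lra.

Set Implicit Arguments.
Unset Strict Implicit.
Unset Printing Implicit Defensive.

Import Order.TTheory GRing.Theory Num.Theory.
Local Open Scope ring_scope.

Lemma fibSS k : fib k.+2 = (fib k.+1 + fib k)%N.
Proof. by []. Qed.

Lemma leq_fib : {homo fib : m n / (m <= n)%N}.
Proof.
apply: Order.NatMonotonyTheory.nondecnP => -[|k] //; exact: leq_addr.
Qed.

Lemma fib_gt0 k : (0 < k)%N -> (0 < fib k)%N.
Proof. exact: (@leq_fib 1). Qed.

Lemma ltn_fib m n : (2 <= m)%N -> (m < n)%N -> (fib m < fib n)%N.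
Proof.
case: m => [|[|m]] // _ /leq_fib; apply: leq_trans.
by rewrite (fibSS m.+1) -[X in (X < _)%N]addn0 ltn_add2l fib_gt0.
Qed.

Lemma fib_add2_ge k : (2 * fib k <= fib k.+2)%N.
Proof. by rewrite fibSS mul2n -addnn leq_add2r leq_fib. Qed.

Lemma fib_double_ge d : (2 <= d)%N -> (3 * fib d <= fib (2 * d))%N.
Proof.
case: d => [|[|[|d]]] // _.
have : (fib d.+3.+3 <= fib (2 * d.+3))%N by apply: leq_fib; lia.
have := @leq_fib d.+3 d.+4 (leqnSn _); rewrite !fibSS; lia.
Qed.

Lemma fib_mul_ge m d : (2 <= d)%N -> (2 <= m)%N ->
  ((2 ^ m.-1 + 1) * fib d <= fib (m * d))%N.
Proof.
move=> d2; elim: m => [|[|m] IH] // _.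
case: m IH => [_|m IH]; first exact: fib_double_ge.
have : (2 * fib (m.+2 * d) <= fib (m.+3 * d))%N.
  by apply: leq_trans (fib_add2_ge _) _; apply: leq_fib; rewrite mulSn; lia.
have := IH isT; rewrite !expnS; lia.
Qed.

Section FibRatio.
Variable R : realFieldType.

Definition fib_ratio (d m : nat) : R :=
  if (d < m)%N && (d %| m)%N then (fib d)%:R / ((fib m)%:R - (fib d)%:R) else 0.

Lemma fib_ratio_ge0 d m : (2 <= d)%N -> 0 <= fib_ratio d m.
Proof.
move=> d2; rewrite /fib_ratio; case: ifP => // /andP[/(ltn_fib d2) lt_dm _].
by rewrite divr_ge0 ?subr_ge0 ?ler_nat 1?ltnW.
Qed.

Lemma fib_ratio_mul_le d m : (2 <= d)%N -> (2 <= m)%N ->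
  fib_ratio d (m * d) <= 2^-1 ^+ m.-1.
Proof.
move=> d2 m2; have := fib_mul_ge d2 m2; have := fib_gt0 (ltnW d2).
rewrite /fib_ratio dvdn_mull // andbT ifT; last by nia.
set a := fib d; set b := fib (m * d); set P := (2 ^ m.-1)%N => a_gt0 le_ab.
have gap : (P * a <= b - a)%N by lia.
have P_gt0 : (0 < P)%N by rewrite expn_gt0.
rewrite -natrB; last by nia.
rewrite ler_pdivrMr ?ltr0n; last by nia.
rewrite exprVn -(natrX R) -/P mulrC ler_pdivlMr ?ltr0n // -natrM ler_nat.
by rewrite mulnC.
Qed.

Lemma sum_fib_ratio_le d n : (2 <= d)%N ->
  \sum_(l < n) fib_ratio d l.+1 <= 1 - 2^-1 ^+ (n %/ d).-1.
Proof.
move=> d2; have d_gt0 : (0 < d)%N by lia.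
elim: n => [|n IH]; first by rewrite big_ord0 div0n expr0 subrr.
rewrite big_ord_recr /= divnS //.
have [/dvdnP[m nE]|ndvd] := boolP (d %| n.+1)%N; last first.
  by rewrite /fib_ratio (negbTE ndvd) andbF addr0.
have := divnS n d_gt0; rewrite {1}nE mulnK // nE dvdn_mull // add1n => mE.
move: IH; rewrite mE; case: (n %/ d)%N => [|q] IH.
  by rewrite mul1n /fib_ratio ltnn addr0.
have := fib_ratio_mul_le d2 (isT : (2 <= q.+2)%N).
rewrite !exprS /= in IH *; lra.
Qed.

Lemma sum_fib_ratio_lt1 d n : (2 <= d)%N -> \sum_(l < n) fib_ratio d l.+1 < 1.
Proof.
move=> d2; apply: le_lt_trans (sum_fib_ratio_le n d2) _.
by rewrite gtrDl oppr_lt0 exprn_gt0 // invr_gt0 ltr0n.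
Qed.

End FibRatio.

Lemma mul_lt0_alt_sign (R : realDomainType) k (u v : R) :
  0 < (-1) ^+ k.+1 * u -> 0 < (-1) ^+ k * v -> u * v < 0.
Proof.
move=> su sv; have := mulr_gt0 su sv.
by rewrite mulrACA exprS mulN1r mulNr -expr2 sqrr_sign mulN1r oppr_gt0.
Qed.

Lemma le_nondecn_seg (R : realDomainType) (f : nat -> R) m :
  (forall j, (j < m)%N -> f j <= f j.+1) ->
  forall i j, (i <= j <= m)%N -> f i <= f j.
Proof.
move=> f_step i j /andP[/subnK <-]; elim: (j - i)%N => [|d IH] // le_m.
by apply: le_trans (IH _) (f_step _ _); lia.
Qed.

Section MonicAtInfinity.
Variable R : realFieldType.
Implicit Types p : {poly R}.

Lemma monic_gt0_near_pinfty p :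
  p \is monic -> exists M, forall x, M <= x -> 0 < p.[x].
Proof.
move/monicP=> lc1; have [|M HM] := @poly_pinfty_gt_lc _ p; first by rewrite lc1.
by exists M => x /HM; rewrite lc1; apply: lt_le_trans.
Qed.

Lemma monic_sign_near_ninfty n p : p \is monic -> size p = n.+1 ->
  exists M, forall x, x <= M -> 0 < (-1) ^+ n * p.[x].
Proof.
move=> /monicP lc1 size_p; pose q := (-1) ^+ n *: (p \Po - 'X).
have : q \is monic.
  rewrite monicE /q lead_coefZ lead_coef_comp ?size_polyN ?size_polyX //.
  rewrite lc1 lead_coefN lead_coefX size_p mul1r -exprMn mulrNN mulr1 expr1n.
  by [].
case/monic_gt0_near_pinfty=> M HM; exists (- M) => x; rewrite lerNr => /HM.
by rewrite /q hornerZ horner_comp hornerN hornerX opprK.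
Qed.

End MonicAtInfinity.

Section RealRootsInterlacing.
Variable R : rcfType.
Implicit Types p : {poly R}.

Lemma monic_roots_between n p (c : nat -> R) :
  p \is monic -> size p = n.+1 ->
  (forall j, (j < n)%N -> c j < c j.+1) ->
  (forall j, (j <= n)%N -> 0 < (-1) ^+ (n - j) * p.[c j]) ->
  exists lam : 'I_n -> R,
    [/\ forall i j : 'I_n, (i < j)%N -> lam i < lam j,
        p = \prod_(i < n) ('X - (lam i)%:P)
      & forall i : 'I_n, c i < lam i < c i.+1].
Proof.
move=> p_monic size_p c_inc p_sign.
have root_between (i : 'I_n) : exists x, root p x && (c i < x < c i.+1).
  have i_lt_n := ltn_ord i.
  have sign_ci := p_sign i (ltnW i_lt_n).
  rewrite -(subnSK i_lt_n) in sign_ci.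
  have := mul_lt0_alt_sign sign_ci (p_sign i.+1 i_lt_n).
  case/(poly_ivtoo (ltW (c_inc i i_lt_n)))=> x x_in root_x.
  by exists x; rewrite root_x; move: x_in; rewrite in_itv.
have [lam /all_and2[root_lam lam_in]] : exists lam : 'I_n -> R,
    forall i, root p (lam i) /\ c i < lam i < c i.+1.
  by have [lam Hlam] := fin_all_exists root_between; exists lam => i; apply/andP.
have lam_inc (i j : 'I_n) : (i < j)%N -> lam i < lam j.
  move=> lt_ij; have /andP[_ lam_i] := lam_in i; have /andP[lam_j _] := lam_in j.
  apply: lt_le_trans lam_i (le_trans _ (ltW lam_j)).
  apply: le_nondecn_seg (fun j lt_jn => ltW (c_inc j lt_jn)) _ _ _.
  by rewrite lt_ij ltnW.
exists lam; split=> //.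
have lam_inj : injective lam.
  move=> i j eq_ij; apply: ord_inj.
  by case: (ltngtP i j) => // /lam_inc; rewrite eq_ij ltxx.
have : \prod_(x <- map lam (index_enum 'I_n)) ('X - x%:P) %| p.
  apply: uniq_roots_dvdp; first by apply/allP => _ /mapP[i _ ->].
  by rewrite uniq_rootsE map_inj_uniq // index_enum_uniq.
rewrite big_map => dvd_p.
apply/eqP; rewrite eq_sym -eqp_monic ?monic_prod_XsubC //.
rewrite -dvdp_size_eqp // size_prod_XsubC size_p.
by rewrite /index_enum; unlock; rewrite -enumT size_enum_ord.
Qed.

Lemma monic_roots_interlace n p (b : nat -> R) :
  p \is monic -> size p = n.+1 ->
  (forall j, (j.+1 < n.-1)%N -> b j < b j.+1) ->
  (forall j, (j < n.-1)%N -> 0 < (-1) ^+ (n - j.+1) * p.[b j]) ->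
  exists lam : 'I_n -> R,
    [/\ forall i j : 'I_n, (i < j)%N -> lam i < lam j,
        p = \prod_(i < n) ('X - (lam i)%:P),
        forall i : 'I_n, (i < n.-1)%N -> lam i < b i
      & forall i : 'I_n, (0 < i)%N -> b i.-1 < lam i].
Proof.
move=> p_monic size_p b_inc p_sign.
have b_le_last j : (j <= n.-2)%N -> b j <= b n.-2.
  move=> le_jn; apply: (@le_nondecn_seg _ b n.-2) => [i lt_i|]; last by lia.
  by apply/ltW/b_inc; lia.
have [L HL] := monic_sign_near_ninfty p_monic size_p.
have [U HU] := monic_gt0_near_pinfty p_monic.
pose lo := Num.min L (b 0) - 1; pose hi := Num.max U (b n.-2) + 1.
have lo_lt_b0 : lo < b 0 by rewrite /lo ltrBlDr ltr_pwDr // ge_min lexx orbT.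
have b_lt_hi j : (j <= n.-2)%N -> b j < hi.
  by move/b_le_last/le_lt_trans; apply; rewrite /hi ltr_pwDr // le_max lexx orbT.
pose c j := if j == 0%N then lo else if j == n then hi else b j.-1.
have [||lam [lam_inc ->] lam_in] := @monic_roots_between n p c p_monic size_p.
- move=> [|j] lt_jn; rewrite /c /=.
    by case: eqP => _ //; apply: lt_trans lo_lt_b0 (b_lt_hi 0%N _).
  rewrite (ltn_eqF lt_jn); case: (eqVneq j.+2 n) => [_|ne_jn]; first by apply: b_lt_hi; lia.
  by apply: b_inc; lia.
- move=> [|j] le_jn; rewrite /c /=.
    by rewrite subn0; apply: HL; rewrite /lo lerBlDr ler_wpDr // ge_min lexx.
  case: (eqVneq j.+1 n) => [->|ne_jn]; last by apply: p_sign; lia.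
  by rewrite subnn mul1r; apply: HU; rewrite /hi ler_wpDr // le_max lexx.
exists lam; split=> // i lt_i.
  have /andP[_] := lam_in i; rewrite /c /= ltn_eqF //; lia.
by have /andP[+ _] := lam_in i; rewrite /c gtn_eqF // ltn_eqF.
Qed.
End RealRootsInterlacing.

Lemma horner_char_poly (R : comNzRingType) n (A : 'M[R]_n) a :
  (char_poly A).[a] = \det (a%:M - A).
Proof.
rewrite /char_poly -horner_evalE -det_map_mx; congr (\det _); apply/matrixP => i j.
by rewrite !mxE rmorphB /= rmorphMn /= !horner_evalE hornerX hornerC.
Qed.

Lemma det_uppertri (R : comNzRingType) n (A : 'M[R]_n) :
  (forall i j : 'I_n, (j < i)%N -> A i j = 0) -> \det A = \prod_i A i i.
Proof.
move=> A_up; rewrite -det_tr det_trig; first by apply: eq_bigr => i _; rewrite mxE.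
by apply/is_trig_mxP => i j lt_ij; rewrite mxE A_up.
Qed.

Lemma ord_down_ind n (P : 'I_n -> Prop) :
  (forall i : 'I_n, (forall j : 'I_n, (i < j)%N -> P j) -> P i) -> forall i, P i.
Proof.
move=> IH; suff bounded m (i : 'I_n) : (n - i <= m)%N -> P i.
  by move=> i; apply: (bounded (n - i)%N).
elim: m i => [|m IHm] i le_m; first by have := ltn_ord i; lia.
by apply: IH => j lt_ij; apply: IHm; lia.
Qed.

Lemma uppertri_subsystem_solvable (F : fieldType) n (S : {pred 'I_n})
    (U : 'M[F]_n) (b : 'I_n -> F) :
  (forall i j, i \in S -> j \in S -> (j < i)%N -> U i j = 0) ->
  (forall i, i \in S -> U i i != 0) ->
  exists v : 'I_n -> F, forall i, i \in S -> \sum_(l in S) U i l * v l = b i.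
Proof.
move=> U_up U_diag.
pose US := \matrix_(i, l) if (i \in S) && (l \in S) then U i l else (i == l)%:R.
have US_unit : US \in unitmx.
  rewrite unitmxE (det_uppertri (A := US)) => [|i j lt_ji]; last first.
    rewrite mxE; case: ifP => [/andP[Si Sj]|_]; first exact: U_up.
    rewrite (_ : (i == j) = false) ?mul0r //.
    by apply/eqP => eq_ij; rewrite eq_ij ltnn in lt_ji.
  rewrite unitfE; apply/prodf_neq0 => i _; rewrite mxE eqxx andbb.
  by case: ifP => [/U_diag|_] //; rewrite oner_neq0.
exists (fun l => (invmx US *m \col_i b i) l ord0) => i Si.
have := congr1 (fun v : 'cV_n => v i ord0) (mulKVmx US_unit (\col_i b i)).
rewrite !mxE => <-; rewrite big_mkcond; apply: eq_bigr => l _.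
rewrite [US i l]mxE Si /=; case: ifP => // Sl.
by rewrite (_ : (i == l) = false) ?mul0r //; apply: contraFF Sl => /eqP <-.
Qed.

Lemma uppertri_subsystem_ge0 (R : numDomainType) n (S : {pred 'I_n})
    (U : 'M[R]_n) (b v : 'I_n -> R) :
  (forall i j, i \in S -> j \in S -> (j < i)%N -> U i j = 0) ->
  (forall i j, i \in S -> j \in S -> (i < j)%N -> U i j <= 0) ->
  (forall i, i \in S -> 0 < U i i) ->
  (forall i, i \in S -> 0 <= b i) ->
  (forall i, i \in S -> \sum_(l in S) U i l * v l = b i) ->
  forall i, i \in S -> 0 <= v i.
Proof.
move=> U_up U_right U_diag b_ge0 Uv_b; elim/ord_down_ind => i IH Si.
have rest_le0 : \sum_(l in S | l != i) U i l * v l <= 0.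
  apply: sumr_le0 => l /andP[Sl ne_li].
  case: (ltngtP i l) => [lt_il|lt_li|/val_inj eq_il].
  - by rewrite mulr_le0_ge0 ?U_right ?IH.
  - by rewrite U_up ?mul0r.
  - by rewrite eq_il eqxx in ne_li.
rewrite -(pmulr_rge0 _ (U_diag i Si)); apply: le_trans (b_ge0 i Si) _.
by rewrite -Uv_b // (bigD1 i) //= gerDl.
Qed.

Lemma prod_sign_gt0 (R : realDomainType) (I : finType) (f : I -> R) (s : I -> nat) :
  (forall i, 0 < (-1) ^+ s i * f i) -> 0 < (-1) ^+ (\sum_i s i) * \prod_i f i.
Proof. by move=> f_sign; rewrite -prodrXr -big_split /=; apply: prodr_gt0 => i _. Qed.

Lemma sum_ord_geq m k : (\sum_(i < m) (k <= i))%N = (m - k)%N.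
Proof.
elim: m => [|m IH]; first by rewrite big_ord0.
by rewrite big_ord_recr /= IH; case: leqP; lia.
Qed.

(* Indices are 0-based: k here is j - 1 above, and row 0 is the exceptional
   first row and column of F_R(n). *)
Section FibRedhefferAtFib.
Variables (R : realFieldType) (n : nat) (k : 'I_n.+1).
Hypothesis k_gt0 : (0 < k)%N.

Let x : R := (fib k.+1)%:R.
Let M : 'M[R]_n.+1 := x%:M - fibRedheffer R n.+1.

Lemma M_offdiag (i j : 'I_n.+1) : i != j -> (0 < j)%N ->
  M i j = - (if (i.+1 %| j.+1)%N then (fib i.+1)%:R else 0).
Proof. by move=> /negbTE ne_ij j_gt0; rewrite !mxE ne_ij mulr0n sub0r gtn_eqF. Qed.

Lemma M_offdiag_le0 (i j : 'I_n.+1) : i != j -> (0 < j)%N -> M i j <= 0.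
Proof. by move=> ne_ij j_gt0; rewrite M_offdiag // oppr_le0; case: ifP. Qed.

Lemma M_lower (i j : 'I_n.+1) : (0 < j < i)%N -> M i j = 0.
Proof.
by case/andP=> j_gt0 lt_ji; rewrite M_offdiag ?gtnNdvd ?oppr0 // -val_eqE /= gtn_eqF.
Qed.

Lemma M_diag (i : 'I_n.+1) : (0 < i)%N -> M i i = x - (fib i.+1)%:R.
Proof. by move=> i_gt0; rewrite !mxE eqxx mulr1n gtn_eqF // dvdnn. Qed.

Lemma M_row0 (j : 'I_n.+1) : (0 < j)%N -> M ord0 j = -1.
Proof. by move=> j_gt0; rewrite M_offdiag ?dvd1n // -val_eqE /= ltn_eqF. Qed.

Lemma M_col0 (i : 'I_n.+1) : (0 < i)%N -> M i ord0 = -1.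
Proof. by move=> i_gt0; rewrite !mxE -val_eqE /= gtn_eqF // mulr0n sub0r. Qed.

Lemma fib_lt_x (i : nat) : (0 < i < k)%N -> (fib i.+1)%:R < x.
Proof. by case/andP=> i_gt0 lt_ik; rewrite ltr_nat ltn_fib. Qed.

Lemma x_lt_fib (i : nat) : (k < i)%N -> x < (fib i.+1)%:R.
Proof. by move=> lt_ki; rewrite ltr_nat ltn_fib. Qed.

Lemma x_le_fib (i : nat) : (k <= i)%N -> x <= (fib i.+1)%:R.
Proof. by move=> le_ki; rewrite ler_nat leq_fib. Qed.

Lemma M_diag_gt0 (i : 'I_n.+1) : (0 < i < k)%N -> 0 < M i i.
Proof. by move=> /andP[i_gt0 lt_ik]; rewrite M_diag // subr_gt0 fib_lt_x ?i_gt0. Qed.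

Lemma M_diag_lt0 (i : 'I_n.+1) : (k < i)%N -> M i i < 0.
Proof. by move=> lt_ki; rewrite M_diag ?subr_lt0 ?x_lt_fib //; lia. Qed.

Lemma k_eq0F : (k == ord0) = false.
Proof. by rewrite -val_eqE /= gtn_eqF. Qed.

Lemma ord0_eqkF : (ord0 == k) = false.
Proof. by rewrite eq_sym k_eq0F. Qed.

Lemma M_col_k_eq0 (i : 'I_n.+1) : (k <= i)%N -> M i k = 0.
Proof.
rewrite leq_eqVlt => /orP[/eqP/val_inj <-|lt_ki]; last by rewrite M_lower ?k_gt0.
by rewrite M_diag // subrr.
Qed.

Lemma exists_tail_weights : exists z : 'I_n.+1 -> R,
  forall i : 'I_n.+1, (k < i)%N -> \sum_(l : 'I_n.+1 | (k < l)%N) M i l * z l = 1.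
Proof.
apply: (uppertri_subsystem_solvable (S := [pred l : 'I_n.+1 | (k < l)%N])).
  by move=> i j; rewrite !inE => lt_ki lt_kj lt_ji; rewrite M_lower // lt_ji andbT; lia.
by move=> i; rewrite inE => lt_ki; rewrite lt_eqF ?M_diag_lt0.
Qed.

Lemma exists_middle_weights : exists y : 'I_n.+1 -> R,
  forall i : 'I_n.+1, (0 < i < k)%N ->
    \sum_(l : 'I_n.+1 | (0 < l < k)%N) M i l * y l = - M i k.
Proof.
apply: (uppertri_subsystem_solvable (S := [pred l : 'I_n.+1 | (0 < l < k)%N])).
  by move=> i j _; rewrite inE => /andP[j_gt0 _] lt_ji; rewrite M_lower // j_gt0.
by move=> i; rewrite inE => mid_i; rewrite gt_eqF ?M_diag_gt0.
Qed.

Section ColumnOperations.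
Variables z y : 'I_n.+1 -> R.
Hypothesis Mz_eq1 : forall i : 'I_n.+1, (k < i)%N ->
  \sum_(l : 'I_n.+1 | (k < l)%N) M i l * z l = 1.
Hypothesis My_eq : forall i : 'I_n.+1, (0 < i < k)%N ->
  \sum_(l : 'I_n.+1 | (0 < l < k)%N) M i l * y l = - M i k.

Lemma M_z_term_bound (i l : 'I_n.+1) : (k <= i < l)%N ->
  z l <= 0 -> M l l * z l <= 1 -> 0 <= M i l * z l <= fib_ratio R i.+1 l.+1.
Proof.
case/andP=> le_ki lt_il zl_le0.
rewrite M_diag; last by lia.
rewrite M_offdiag -?val_eqE /= ?ltn_eqF //; last by lia.
rewrite /fib_ratio ltnS lt_il /=; case: ifP => _; last by rewrite oppr0 mul0r lexx.
have := x_le_fib le_ki; have : (fib i.+1)%:R < (fib l.+1)%:R :> R.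
  by rewrite ltr_nat ltn_fib //; lia.
have : 0 <= (fib i.+1)%:R :> R by [].
move: (fib i.+1)%:R (fib l.+1)%:R => Fi Fl Fi_ge0 lt_FiFl le_xFi Mzl_le1.
have gap_z : (Fl - Fi) * - z l <= 1 by nra.
by apply/andP; split; [nra | rewrite ler_pdivlMr; nra].
Qed.

Lemma M_z_tail_bound (i : 'I_n.+1) : (k <= i)%N ->
  (forall l : 'I_n.+1, (i < l)%N -> z l <= 0 /\ M l l * z l <= 1) ->
  0 <= \sum_(l : 'I_n.+1 | (i < l)%N) M i l * z l < 1.
Proof.
move=> le_ki z_right.
have term (l : 'I_n.+1) : (i < l)%N -> 0 <= M i l * z l <= fib_ratio R i.+1 l.+1.
  by move=> lt_il; have [] := z_right l lt_il; apply: M_z_term_bound; rewrite le_ki.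
apply/andP; split; first by apply: sumr_ge0 => l /term /andP[].
apply: le_lt_trans (sum_fib_ratio_lt1 R n.+1 (_ : 2 <= i.+1)%N); last by lia.
rewrite big_mkcond /=; apply: ler_sum => l _.
by case: ifP => [/term /andP[]//|_]; apply: fib_ratio_ge0; lia.
Qed.

Lemma z_bounds : forall i : 'I_n.+1, (k < i)%N -> z i <= 0 /\ M i i * z i <= 1.
Proof.
elim/ord_down_ind => i IH lt_ki.
have /andP[tail_ge0 tail_lt1] := M_z_tail_bound (ltnW lt_ki)
  (fun l lt_il => IH l lt_il (ltn_trans lt_ki lt_il)).
have row_i : M i i * z i + \sum_(l : 'I_n.+1 | (i < l)%N) M i l * z l = 1.
  rewrite -(Mz_eq1 lt_ki) [RHS](bigD1 i) //=; congr (_ + _).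
  rewrite big_mkcond [RHS]big_mkcond; apply: eq_bigr => l _.
  case: (ltngtP i l) => [lt_il|lt_li|/val_inj <-]; rewrite ?eqxx ?andbF //=.
    by rewrite (ltn_trans lt_ki lt_il) -val_eqE /= gtn_eqF.
  by case: ifP => // /andP[lt_kl _]; rewrite M_lower ?mul0r // lt_li andbT; lia.
have Mz_gt0 : 0 < M i i * z i by lra.
split; last by lra.
by move: Mz_gt0; rewrite nmulr_rgt0 ?M_diag_lt0 // => /ltW.
Qed.

Lemma M_z_row_lt1 : \sum_(l : 'I_n.+1 | (k < l)%N) M k l * z l < 1.
Proof. by have /andP[] := M_z_tail_bound (leqnn k) z_bounds. Qed.

Lemma y_ge0 (i : 'I_n.+1) : (0 < i < k)%N -> 0 <= y i.
Proof.
apply: (uppertri_subsystem_ge0 (S := [pred l : 'I_n.+1 | (0 < l < k)%N])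
  (U := M) (b := fun i => - M i k)) => {i} [i j _||i|i|i].
- by rewrite inE => /andP[j_gt0 _] lt_ji; rewrite M_lower // j_gt0.
- move=> i j _; rewrite inE => /andP[j_gt0 _] lt_ij.
  by rewrite M_offdiag_le0 // -val_eqE /= ltn_eqF.
- exact: M_diag_gt0.
- by rewrite inE => /andP[_ lt_ik]; rewrite oppr_ge0 M_offdiag_le0 // -val_eqE /= ltn_eqF.
- exact: My_eq.
Qed.

(* Right multiplication by 1 + Z adds sum_(l > k) z l * col l to column 0, and
   by 1 + Y adds sum_(0 < l < k) y l * col l to column k; xcol swaps the two. *)
Let Z : 'M[R]_n.+1 := \matrix_(l, j) if (j == ord0) && (k < l)%N then z l else 0.
Let Y : 'M[R]_n.+1 := \matrix_(l, j) if (j == k) && (0 < l < k)%N then y l else 0.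
Let W := xcol ord0 k (M *m (1 + Z) *m (1 + Y)).

Lemma det_W : \det W = - \det M.
Proof.
have det_1Z : \det (1 + Z) = 1.
  rewrite det_trig; last first.
    apply/is_trig_mxP => i j lt_ij; rewrite !mxE -val_eqE /= ltn_eqF //.
    by rewrite mulr0n add0r; case: (eqVneq j ord0) lt_ij => [->|_].
  apply: big1 => i _; rewrite !mxE eqxx.
  by case: eqP => [->|_] //=; rewrite addr0.
have det_1Y : \det (1 + Y) = 1.
  rewrite det_uppertri => [|i j lt_ji]; last first.
    rewrite !mxE -val_eqE /= gtn_eqF //.
    rewrite mulr0n add0r; case: (eqVneq j k) => [eq_jk|] //=.
    by rewrite -eq_jk (leq_gtF (ltnW lt_ji)) andbF.
  apply: big1 => i _; rewrite !mxE eqxx.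
  by case: eqP => [->|_] //=; rewrite ?ltnn ?andbF addr0.
rewrite /W xcolE !det_mulmx det_1Z det_1Y det_perm odd_tperm.
by rewrite -val_eqE /= ltn_eqF // !mulr1 expr1 mulrN1.
Qed.

Let SZ i := \sum_(l : 'I_n.+1 | (k < l)%N) M i l * z l.
Let SY i := \sum_(l : 'I_n.+1 | (0 < l < k)%N) M i l * y l.

Lemma col_ops_entry i j : (M *m (1 + Z) *m (1 + Y)) i j =
  M i j + (if j == ord0 then SZ i else 0) + (if j == k then SY i else 0).
Proof.
have mulZ (X : 'M_n.+1) i' j' : (X *m Z) i' j' =
    if j' == ord0 then \sum_(l : 'I_n.+1 | (k < l)%N) X i' l * z l else 0.
  rewrite mxE; case: eqP => [->|/eqP/negbTE ne_j0].
    rewrite [RHS]big_mkcond; apply: eq_bigr => l _.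
    by rewrite mxE eqxx /=; case: ifP; rewrite ?mulr0.
  by apply: big1 => l _; rewrite mxE ne_j0 mulr0.
have mulY (X : 'M_n.+1) i' j' : (X *m Y) i' j' =
    if j' == k then \sum_(l : 'I_n.+1 | (0 < l < k)%N) X i' l * y l else 0.
  rewrite mxE; case: eqP => [->|/eqP/negbTE ne_jk].
    rewrite [RHS]big_mkcond; apply: eq_bigr => l _.
    by rewrite mxE eqxx /=; case: ifP; rewrite ?mulr0.
  by apply: big1 => l _; rewrite mxE ne_jk mulr0.
rewrite !mulmxDr !mulmx1 [LHS]mxE [(M + _) i j]mxE mulZ mulY; congr (_ + _).
case: ifP => // _; apply: eq_bigr => l /andP[l_gt0 _].
by rewrite mxE mulZ -val_eqE /= gtn_eqF // addr0.
Qed.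

Lemma W_lower (i j : 'I_n.+1) : (j < i)%N -> W i j = 0.
Proof.
move=> lt_ji; rewrite mxE col_ops_entry.
have i_gt0 : (0 < i)%N by apply: leq_ltn_trans lt_ji.
case: (eqVneq j ord0) => [->|ne_j0].
  rewrite tpermL eqxx k_eq0F addr0.
  case: (ltnP i k) => [lt_ik|le_ki].
    by rewrite /SY My_eq ?i_gt0 // addrN.
  rewrite M_col_k_eq0 // add0r; apply: big1 => l /andP[l_gt0 lt_lk].
  by rewrite M_lower ?mul0r // l_gt0; apply: leq_trans le_ki.
case: (eqVneq j k) => [eq_jk|ne_jk].
  rewrite eq_jk tpermR eqxx ord0_eqkF addr0 M_col0 // /SZ Mz_eq1 ?addNr //.
  by rewrite -eq_jk.
rewrite tpermD; [|by rewrite eq_sym..].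
rewrite (negbTE ne_j0) (negbTE ne_jk) !addr0 M_lower //.
by rewrite lt_ji andbT lt0n; move: ne_j0; rewrite -val_eqE.
Qed.

Lemma W_diag_sign (i : 'I_n.+1) : 0 < (-1) ^+ ((i == ord0) + (k <= i))%N * W i i.
Proof.
rewrite mxE col_ops_entry.
case: (eqVneq i ord0) => [->|ne_i0].
  rewrite tpermL k_eq0F eqxx addr0 /= M_row0 // /SY.
  rewrite (eq_bigr (fun l => - y l)) => [|l /andP[l_gt0 _]]; last first.
    by rewrite M_row0 // mulN1r.
  rewrite sumrN leqNgt k_gt0 /= expr1 mulN1r opprD !opprK ltr_pwDl //.
  by apply: sumr_ge0 => l /y_ge0.
have i_gt0 : (0 < i)%N by rewrite lt0n; move: ne_i0; rewrite -val_eqE.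
case: (eqVneq i k) => [->|ne_ik].
  rewrite tpermR eqxx ord0_eqkF addr0 leqnn M_col0 // expr1 mulN1r.
  by rewrite oppr_gt0 addrC subr_lt0 M_z_row_lt1.
rewrite tpermD; [|by rewrite eq_sym..].
rewrite (negbTE ne_i0) (negbTE ne_ik) !addr0.
case: (ltngtP i k) => [lt_ik|lt_ki|/val_inj eq_ik]; last by rewrite eq_ik eqxx in ne_ik.
  by rewrite expr0 mul1r M_diag_gt0 ?i_gt0.
by rewrite expr1 mulN1r oppr_gt0 M_diag_lt0.
Qed.

Lemma det_M_sign : 0 < (-1) ^+ (n.+1 - k) * \det M.
Proof.
have := prod_sign_gt0 W_diag_sign; rewrite big_split /= sum_ord_geq.
rewrite (bigD1 ord0) //= big1 => [|i /negbTE ->] //.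
rewrite -det_uppertri; last exact: W_lower.
by rewrite det_W addn0 add1n exprS mulN1r mulrNN.
Qed.

End ColumnOperations.

Lemma det_shift_fibRedheffer_sign : 0 < (-1) ^+ (n.+1 - k) * \det M.
Proof.
have [z Mz_eq1] := exists_tail_weights; have [y My_eq] := exists_middle_weights.
exact: det_M_sign Mz_eq1 My_eq.
Qed.

End FibRedhefferAtFib.

Lemma char_poly_fibRedheffer_sign (R : realFieldType) n k : (0 < k < n)%N ->
  0 < (-1) ^+ (n - k) * (char_poly (fibRedheffer R n)).[(fib k.+1)%:R].
Proof.
case: n => [|n] /andP[k_gt0 lt_kn] //.
by rewrite horner_char_poly; apply: (@det_shift_fibRedheffer_sign R n (Ordinal lt_kn)).
Qed.

Theorem theorem5 (R : realType) (n : nat) (hn : (0 < n)%N) :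
  exists lam : 'I_n -> R,
    [/\ (forall i j : 'I_n, (i < j)%N -> lam i < lam j),
        char_poly (fibRedheffer R n) = \prod_(i < n) ('X - (lam i)%:P)
      & (1 < n)%N ->
        [/\ forall i : 'I_n, (i : nat) = 0%N -> lam i < 1,
            forall i : 'I_n, (1 <= i)%N -> (i <= n - 2)%N ->
              (fib i.+1)%:R < lam i /\ lam i < (fib i.+2)%:R
          & forall i : 'I_n, (i : nat) = n.-1 -> (fib n)%:R < lam i]].
Proof.
pose b j : R := (fib j.+2)%:R.
have b_inc j : (j.+1 < n.-1)%N -> b j < b j.+1 by rewrite ltr_nat ltn_fib.
have b_sign j : (j < n.-1)%N ->
    0 < (-1) ^+ (n - j.+1) * (char_poly (fibRedheffer R n)).[b j].
  by move=> lt_jn; apply: char_poly_fibRedheffer_sign; lia.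
have [lam [lam_inc p_eq lam_lt lam_gt]] :=
  monic_roots_interlace (char_poly_monic _) (size_char_poly _) b_inc b_sign.
exists lam; split=> // n_gt1; split.
- by move=> i i_eq0; have := lam_lt i; rewrite i_eq0; apply; lia.
- move=> i i_gt0 le_in; split; last by apply: lam_lt; lia.
  by have := lam_gt i i_gt0; rewrite /b prednK.
- move=> i i_eq; have n_eq : n.-2.+2 = n by lia.
  by have := lam_gt i; rewrite /b i_eq n_eq; apply; lia.
Qed.
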